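(* Let $d_X, d_Y \ge 1$ and let $\mathcal{F}:\mathbb{R}^{d_X}\to\mathbb{R}^{d_Y}$ be a linear function, $\mathcal{F}(x)=xA$ for a matrix $A\in\mathbb{R}^{d_X\times d_Y}$ (vectors are row vectors). Let $y_1,\dots,y_M\in\mathbb{R}^{d_Y}$ be desired outputs and $x_1^0,\dots,x_M^0\in\mathbb{R}^{d_X}$ arbitrary initial inputs, and run Iterative Inversion with affine least-squares regression as described in the context. If $\operatorname{rank}\big(\mathcal{F}(X^0)-\mathbf{1}\,\overline{\mathcal{F}(X^0)}\big)=d_Y$, then the algorithm converges in one iteration, i.e. $\mathcal{F}(x_i^1)=y_i$ for all $i=1,\dots,M$.
   Context: Iterative Inversion (affine least-squares version). Given desired outputs $y_1,\dots,y_M$ and current inputs $x_1^n,\dots,x_M^n$, form the matrices $X^n=(x_1^n,\dots,x_M^n)^T\in\mathbb{R}^{M\times d_X}$, $\mathcal{F}(X^n)=(\mathcal{F}(x_1^n),\dots,\mathcal{F}(x_M^n))^T\in\mathbb{R}^{M\times d_Y}$, $Y=(y_1,\dots,y_M)^T$, and the row means $\overline{X^n}=\frac1M\sum_i x_i^n$, $\overline{\mathcal{F}(X^n)}=\frac1M\sum_i\mathcal{F}(x_i^n)$, $\overline{Y}=\frac1M\sum_i y_i$; $\mathbf{1}$ denotes the all-ones column vector of length $M$, so $\mathbf{1}u$ repeats the row vector $u$ in each row. The regression step fits an affine map $\mathcal{G}_{\Theta,b}(y)=y\Theta+b$ ($\Theta\in\mathbb{R}^{d_Y\times d_X}$, $b\in\mathbb{R}^{1\times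 d_X}$) by $(\Theta_{n+1},b_{n+1})\in\arg\min_{\Theta,b}\|\mathcal{F}(X^n)\Theta+\mathbf{1}b-X^n\|_F^2$, taking the minimum-norm solution $\Theta_{n+1}=(\mathcal{F}(X^n)-\mathbf{1}\overline{\mathcal{F}(X^n)})^{\dagger}(X^n-\mathbf{1}\overline{X^n})$, $b_{n+1}=\overline{X^n}-\overline{\mathcal{F}(X^n)}\Theta_{n+1}$, where $\dagger$ is the Moore–Penrose pseudoinverse. The new inputs are $x_i^{n+1}=\mathcal{G}_{\Theta_{n+1},b_{n+1}}(y_i)=y_i\Theta_{n+1}+b_{n+1}$. *)

From HB Require Import structures.
From mathcomp Require Import all_boot all_order all_algebra.
From Stdlib Require Import ClassicalEpsilon.
Set Implicit Arguments. Unset Strict Implicit. Unset Printing Implicit Defensive.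
Import Order.TTheory GRing.Theory Num.Theory.
Local Open Scope ring_scope.

Section Defs.
Variable R : realFieldType.

(* The four Penrose conditions (over a real field, conjugate transpose = transpose). *)
Definition is_pinv m n (A : 'M[R]_(m, n)) (P : 'M[R]_(n, m)) : Prop :=
  [/\ A *m P *m A = A, P *m A *m P = P,
      (A *m P)^T = A *m P & (P *m A)^T = P *m A].

(* The Moore--Penrose pseudoinverse: the (unique, always existing) matrix
   satisfying the Penrose conditions, selected by Hilbert's epsilon. *)
Definition pinv m n (A : 'M[R]_(m, n)) : 'M[R]_(n, m) :=
  epsilon (inhabits 0) (fun P => is_pinv A P).

Definition ones M : 'cV[R]_M := const_mx 1.

Definition mean_row M d (X : 'M[R]_(M, d)) : 'rV[R]_d :=
  (M%:R)^-1 *: \sum_(i < M) row i X.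

Definition center M d (X : 'M[R]_(M, d)) : 'M[R]_(M, d) :=
  X - ones M *m mean_row X.

(* Regression step: minimum-norm affine least-squares fit of inputs on outputs. *)
Definition Theta_next M dX dY (X : 'M[R]_(M, dX)) (FX : 'M[R]_(M, dY))
  : 'M[R]_(dY, dX) := pinv (center FX) *m center X.

Definition b_next M dX dY (X : 'M[R]_(M, dX)) (FX : 'M[R]_(M, dY))
  : 'rV[R]_dX := mean_row X - mean_row FX *m Theta_next X FX.

End Defs.

(* Centering commutes with right multiplication by A, so the regression
   regresses the centered inputs C on C *m A. Full column rank of C *m A makes
   its pseudoinverse a left inverse, hence Theta *m A = pinv (C *m A) *m (C *m A)
   is the identity, and b *m A = mean(X) *m A - mean(X *m A) *m Theta *m A
   vanishes. *)

From mathcomp Require Import all_boot all_order all_algebra.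
From Stdlib Require Import ClassicalEpsilon.
Import GRing.Theory Num.Theory.
Local Open Scope ring_scope.

Lemma mulmx_tr_eq0 {R : realDomainType} {p q} {N : 'M[R]_(p, q)} :
  N *m N^T = 0 -> N = 0.
Proof.
move=> NNt0; apply/matrixP => i j; rewrite mxE.
have := congr1 (fun B : 'M[R]_p => B i i) NNt0; rewrite !mxE => /eqP.
rewrite psumr_eq0; last by move=> k _; rewrite mxE -expr2 sqr_ge0.
move=> /allP /(_ j (mem_index_enum j)) /implyP /(_ isT).
by rewrite mxE -expr2 sqrf_eq0 => /eqP.
Qed.

Section PseudoInverse.
Variable R : realFieldType.

Lemma gram_unitmx m n (C : 'M[R]_(m, n)) : row_full C -> C^T *m C \in unitmx.
Proof.
move=> /row_fullP [B BC1].
rewrite -row_free_unit -kermx_eq0; apply/eqP.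
set K := kermx (C^T *m C).
have KCt0 : (K *m C^T) *m (K *m C^T)^T = 0.
  by rewrite trmx_mul trmxK mulmxA -(mulmxA K) mulmx_ker mul0mx.
have <- : K *m C^T *m B^T = K by rewrite -mulmxA -trmx_mul BC1 trmx1 mulmx1.
by rewrite (mulmx_tr_eq0 KCt0) mul0mx.
Qed.

Lemma is_pinv_row_full m n (C : 'M[R]_(m, n)) :
  row_full C -> is_pinv C (invmx (C^T *m C) *m C^T).
Proof.
move=> /gram_unitmx; set G := C^T *m C => Gu.
have GT : G^T = G by rewrite /G trmx_mul trmxK.
split.
- by rewrite -!mulmxA -/G mulVmx // mulmx1.
- by rewrite -!mulmxA (mulmxA C^T) -/G mulmxA mulVmx // mul1mx.
- by rewrite !trmx_mul trmxK trmx_inv GT mulmxA.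
- by rewrite -mulmxA -/G mulVmx // trmx1.
Qed.

Lemma pinvP m n (C : 'M[R]_(m, n)) :
  (exists P, is_pinv C P) -> is_pinv C (pinv C).
Proof. exact: epsilon_spec. Qed.

Lemma is_pinv_mul_row_full m n (C : 'M[R]_(m, n)) (P : 'M[R]_(n, m)) :
  is_pinv C P -> row_full C -> P *m C = 1%:M.
Proof.
move=> [CPC _ _ _] /row_fullP [B BC1].
by have := congr1 (mulmx B) CPC; rewrite !mulmxA BC1 !mul1mx.
Qed.

Lemma pinv_mul_row_full m n (C : 'M[R]_(m, n)) :
  row_full C -> pinv C *m C = 1%:M.
Proof.
move=> Cfull; have Cpinv : is_pinv C (pinv C).
  by apply: pinvP; exists (invmx (C^T *m C) *m C^T); apply: is_pinv_row_full.
exact: is_pinv_mul_row_full Cpinv Cfull.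
Qed.

End PseudoInverse.

Section LinearForwardMap.
Variables (R : realFieldType) (M dX dY : nat).
Variables (X : 'M[R]_(M, dX)) (A : 'M[R]_(dX, dY)).

Lemma mean_row_mul : mean_row (X *m A) = mean_row X *m A.
Proof.
rewrite /mean_row -scalemxAl mulmx_suml; congr (_ *: _).
by apply: eq_bigr => i _; rewrite row_mul.
Qed.

Lemma center_mul : center (X *m A) = center X *m A.
Proof. by rewrite /center mean_row_mul mulmxBl mulmxA. Qed.

Hypothesis centered_full : row_full (center (X *m A)).

Lemma Theta_next_mul : Theta_next X (X *m A) *m A = 1%:M.
Proof.
by rewrite /Theta_next -mulmxA -center_mul pinv_mul_row_full.
Qed.

Lemma b_next_mul : b_next X (X *m A) *m A = 0.
Proof.
by rewrite /b_next mulmxBl -mulmxA Theta_next_mul mulmx1 mean_row_mul subrr.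
Qed.

End LinearForwardMap.

Theorem theorem1 (R : realFieldType) (dX dY M : nat)
  (hdX : (1 <= dX)%N) (hdY : (1 <= dY)%N)
  (A : 'M[R]_(dX, dY)) (Y : 'M[R]_(M, dY)) (X0 : 'M[R]_(M, dX))
  (hrank : \rank (center (X0 *m A)) = dY) :
  let Theta := Theta_next X0 (X0 *m A) in
  let b := b_next X0 (X0 *m A) in
  forall i : 'I_M, (row i Y *m Theta + b) *m A = row i Y.
Proof.
move=> Theta b i.
have full : row_full (center (X0 *m A)) by rewrite /row_full hrank.
by rewrite mulmxDl -mulmxA Theta_next_mul // b_next_mul // mulmx1 addr0.
Qed.
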